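(* Let $X$ be a regular Type I pseudocompact space and $Y$ any space. Then $X$ is countably compact, and $\mathsf{P}(X,Y)\Leftrightarrow\mathsf{P_{cpt}}(X,Y)$ for each $\mathsf{P}\in\{\mathsf{EC},\mathsf{S},\mathsf{L},\mathsf{BR}\}$.
   Context: All spaces are Hausdorff and maps continuous. A space is pseudocompact if every continuous real-valued function on it is bounded (no further separation axiom assumed). A space $X$ is of Type I if $X=\bigcup_{\alpha<\omega_1}X_\alpha$ with $X_\alpha$ open, $\overline{X_\alpha}\subset X_\beta$ for $\alpha<\beta$, $\overline{X_\alpha}$ Lindelöf, and $X\neq X_\alpha$ for all $\alpha$. For a non-Lindelöf space $X$ and a space $Y$, and for every continuous $f:X\to Y$: $\mathsf{EC}(X,Y)$ asks for a Lindelöf $Z\subset X$ with $f(X\setminus Z)$ a singleton; $\mathsf{S}(X,Y)$ asks for a Lindelöf $Z\subset X$ and a retraction $r:X\to Z$ with $f\circ r=f$; $\mathsf{L}(X,Y)$ asks for a Lindelöf $Z$ with $f(Z)=f(X)$; $\mathsf{BR}(X,Y)$ asks for a Lindelöf $Z$ with $f(X\setminus W)=f(X\setminus Z)$ for every Lindelöf $W\supseteq Z$. $\mathsf{P_{cpt}}$ is obtained from $\mathsf{P}$ by replacing every occurrence of ''Lindelöf'' by ''compact'' (including for $W$ in $\mathsf{BR}$). *)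

From HB Require Import structures.
From mathcomp Require Import all_boot all_order all_algebra.
From mathcomp Require Import all_classical all_reals all_analysis.
From mathcomp Require Import Rstruct Rstruct_topology.


Set Implicit Arguments.
Unset Strict Implicit.
Unset Printing Implicit Defensive.

Import Order.TTheory GRing.Theory Num.Theory.
Local Open Scope classical_set_scope.
Local Open Scope ring_scope.

(* A (possibly non-open) subset A of T is Lindelof (as a subspace): every
   cover of A by open sets of T has a countable subcover.  This mirrors the
   library's [cover_compact]. *)
Definition lindelof {T : topologicalType} (A : set T) :=
  forall (I : choiceType) (D : set I) (f : I -> set T),
    (forall i, D i -> open (f i)) -> A `<=` \bigcup_(i in D) f i ->
    exists2 D' : set I, D' `<=` D /\ countable D' & A `<=` \bigcup_(i in D') f i.

(* Countably compact: every countable open cover of the space has a finite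
   subcover (countable covers are enumerated by nat, repetitions allowed). *)
Definition countably_compact (T : topologicalType) :=
  forall f : nat -> set T, (forall n, open (f n)) ->
    [set: T] `<=` \bigcup_n f n ->
    exists n : nat, [set: T] `<=` \bigcup_(i in [set k : nat | (k < n)%N]) f i.

Definition pseudocompact (T : topologicalType) :=
  forall f : T -> Rdefinitions.R, continuous f ->
    exists M : Rdefinitions.R, forall x, `|f x| <= M.

(* (I, lt) is (order-isomorphic to) the first uncountable ordinal omega_1:
   a strict well-order which is uncountable but all of whose proper initial
   segments are countable. *)
Definition omega1_order (I : Type) (lt : I -> I -> Prop) :=
  well_founded lt /\
  [/\ (forall a, ~ lt a a),
      (forall a b c, lt a b -> lt b c -> lt a c),
      (forall a b, [\/ lt a b, a = b | lt b a]),
      ~ countable [set: I] &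
      (forall a, countable [set b | lt b a])].

Definition typeI (X : topologicalType) :=
  exists (I : Type) (lt : I -> I -> Prop) (Xs : I -> set X),
    omega1_order lt /\
    [/\ (forall a, open (Xs a)),
        (forall a b, lt a b -> closure (Xs a) `<=` Xs b),
        (forall a, lindelof (closure (Xs a))),
        [set: X] = \bigcup_(a in [set: I]) Xs a &
        (forall a, Xs a <> [set: X])].

Section Props.
Variables (X Y : topologicalType) (small : set X -> Prop).

Definition EC_prop :=
  forall f : X -> Y, continuous f ->
    exists Z : set X, small Z /\ exists y : Y, f @` (~` Z) = [set y].

Definition S_prop :=
  forall f : X -> Y, continuous f ->
    exists Z : set X, small Z /\
      exists r : X -> X, [/\ continuous r, (forall x, Z (r x)),
                             (forall z, Z z -> r z = z) &
                             (forall x, f (r x) = f x)].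

Definition L_prop :=
  forall f : X -> Y, continuous f ->
    exists Z : set X, small Z /\ f @` Z = f @` [set: X].

Definition BR_prop :=
  forall f : X -> Y, continuous f ->
    exists Z : set X, small Z /\
      forall W : set X, small W -> Z `<=` W -> f @` (~` W) = f @` (~` Z).
End Props.

Definition EC X Y := @EC_prop X Y lindelof.
Definition EC_cpt X Y := @EC_prop X Y compact.
Definition S X Y := @S_prop X Y lindelof.
Definition S_cpt X Y := @S_prop X Y compact.
Definition L X Y := @L_prop X Y lindelof.
Definition L_cpt X Y := @L_prop X Y compact.
Definition BR X Y := @BR_prop X Y lindelof.
Definition BR_cpt X Y := @BR_prop X Y compact.

From HB Require Import structures.
From mathcomp Require Import all_boot all_order all_algebra.
From mathcomp Require Import all_classical all_reals all_analysis.
From mathcomp Require Import Rstruct Rstruct_topology finmap lra.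

(** If X were not countably compact, some sequence (x_n) would have no cluster
   point, so D = {x_n} is closed discrete; being countable, D lies in a single
   X_b. The closure K of X_b is closed, Lindelöf and regular, hence normal, and
   Tietze and Urysohn give a continuous f on K with f (x_n) > n and f = 1 on
   K minus X_b. Extended by 1 outside X_b, f is an unbounded continuous
   function on X, contradicting pseudocompactness.
   Once X is countably compact, closed Lindelöf sets are compact, and every
   Lindelöf set Z lies in some X_a (a countable subcover of Z by the X_a is
   bounded in omega_1), hence in the compact proper subset cl X_a. Each of the
   four properties transfers between Lindelöf and compact witnesses by
   enlarging a Lindelöf witness to such a compact set; for S the witness is a
   fixed-point set, hence closed, hence compact inside its compact hull. *)

Set Implicit Arguments.
Unset Strict Implicit.
Unset Printing Implicit Defensive.
Import Order.TTheory GRing.Theory Num.Theory numFieldTopology.Exports.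
Local Open Scope classical_set_scope.
Local Open Scope ring_scope.

Lemma countableU (T : Type) (A B : set T) :
  countable A -> countable B -> countable (A `|` B).
Proof.
move=> cA cB; have -> : A `|` B = \bigcup_(i in [set: bool]) (if i then A else B).
  by apply/seteqP; split=> [x [Ax|Bx]|x [[] _]]; [exists true|exists false|left|right].
by apply: bigcup_countable => // -[].
Qed.

Lemma omega1_countable_bounded (I : Type) (lt : I -> I -> Prop) (S : set I) :
  omega1_order lt -> countable S -> exists b, forall s, S s -> lt s b.
Proof.
move=> [_ [_ _ trichotomy uncountableI countable_segment]] cS.
pose U := \bigcup_(s in S) [set c | lt c s] `|` S.
have [b Ub] : exists b, ~ U b.
  apply/existsNP => allU; apply: uncountableI.
  apply: sub_countable (countableU (bigcup_countable cS _) cS) => [|s _].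
    by apply: subset_card_le => c _; exact: allU.
  exact: countable_segment.
exists b => s Ss; have [//|sb|bs] := trichotomy s b.
  by exfalso; apply: Ub; right; rewrite -sb.
by exfalso; apply: Ub; left; exists s.
Qed.

Section compact_cover_pointed.
Context (T : topologicalType) (t : T).

Local Definition pointed_copy : Type := T.
HB.instance Definition _ := Topological.copy pointed_copy T.
HB.instance Definition _ := isPointed.Build pointed_copy t.

Lemma compact_cover_at (A : set T) : compact A = cover_compact (A : set pointed_copy).
Proof. by rewrite -(compact_cover pointed_copy). Qed.

End compact_cover_pointed.

(* [compact_cover] is stated for pointed spaces; a point of [A] makes [T] one. *)
Lemma compact_coverE (T : topologicalType) (A : set T) :
  compact A <-> cover_compact A.
Proof.
have [[a _]|/set0P/negP/negPn/eqP->] := pselect (A !=set0).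
  by rewrite (compact_cover_at a).
by split=> _; [move=> I D f _ _; exists fset0 | exact: compact0].
Qed.

Section lindelof.
Context {T : topologicalType}.

Lemma compact_lindelof (A : set T) : compact A -> lindelof A.
Proof.
move=> /compact_coverE cA I D f fo Acov; have [D' D'D AD'] := cA I D f fo Acov.
exists [set` D'] => //; split; last exact: countable_fset.
by move=> i /D'D /set_mem.
Qed.

Lemma lindelof_closed_subset (K A : set T) :
  lindelof K -> closed A -> A `<=` K -> lindelof A.
Proof.
move=> lK cA AK I D f fo Acov.
pose g (o : option I) := if o is Some i then f i else ~` A.
have [|x Kx|D' [D'D cD'] KD'] := lK _ [set o | if o is Some i then D i else True] g.
- by case=> [i|] /= Di; [exact: fo | exact: closed_openC].
- have [/Acov [i Di fx]|nAx] := pselect (A x); first by exists (Some i).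
  by exists None.
exists [set i | D' (Some i)]; first split.
- by move=> i /D'D.
- move: cD' => /countable_injP [h hinj]; apply/countable_injP; exists (h \o Some).
  by move=> i j /set_mem D'i /set_mem D'j /(hinj _ _ (mem_set D'i) (mem_set D'j)) [].
- by move=> x Ax; have [[i|] //= D'i gx] := KD' x (AK x Ax); exists i.
Qed.

Lemma lindelof_seq_subcover (A : set T) (I : choiceType) (D : set I) (f : I -> set T) :
  lindelof A -> (forall i, D i -> open (f i)) -> A `<=` \bigcup_(i in D) f i ->
  A = set0 \/ exists2 e : nat -> I, (forall n, D (e n)) & A `<=` \bigcup_n f (e n).
Proof.
move=> lA fo Acov; have [D' [D'D /pfcard_geP cD'] AD'] := lA I D f fo Acov.
case: cD' => [D'0|[e]]; [left | right].
  by apply/seteqP; split=> // x /AD'; rewrite D'0 => -[].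
exists e => [n|x /AD' [i D'i fx]]; first exact/D'D/funS.
by have [n _ eni] := surj (f := e) D'i; exists n; rewrite ?eni.
Qed.

Lemma countably_compact_lindelof_compact (A : set T) :
  countably_compact T -> closed A -> lindelof A -> compact A.
Proof.
move=> ccT cA lA; apply/compact_coverE => I D f fo Acov.
have [->|[e De Ae]] := lindelof_seq_subcover lA fo Acov; first by exists fset0.
have [|x _|n Xn] := ccT (fun n => f (e n) `|` ~` A).
- by move=> n; apply: openU; [exact: fo | exact: closed_openC].
- have [/Ae [n _ fx]|nAx] := pselect (A x); first by exists n => //; left.
  by exists 0%N => //; right.
have /finite_fsetP [F FE] : finite_set (e @` `I_n) by exact/finite_image/finite_II.
have FeI i : i \in F -> exists2 k, (k < n)%N & e k = i.
  by move=> iF; have : [set` F] i by []; rewrite -FE => -[k kn eki]; exists k.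
exists F.
  by move=> i /FeI [k _ <-]; exact/mem_set/De.
move=> x Ax; have [k kn [fx|//]] := Xn x Logic.I; exists (e k) => //.
by rewrite -FE; exists k.
Qed.

End lindelof.

Section regular_lindelof.
Context {T : topologicalType}.
Hypothesis regT : regular_space T.

Lemma regular_lindelof_closure_cover (A B : set T) :
  lindelof A -> closed B -> A `&` B = set0 ->
  exists u : nat -> set T, [/\ forall n, open (u n),
    A `<=` \bigcup_n u n & forall n, closure (u n) `&` B = set0].
Proof.
move=> lA cB AB.
have /choice [W WP] a : exists W : set T, A a -> open_nbhs a W /\ closure W `<=` ~` B.
  have [Aa|] := pselect (A a); last by exists set0.
  have nBa : (~` B) a by move=> Ba; rewrite -[False]/(set0 a) -AB.
  have [W aW clWB] := regT (open_nbhs_nbhs (conj (closed_openC cB) nBa)).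
  exists W° => _; split; first by split; [exact: open_interior | exact: aW].
  exact: subset_trans (closureS (@interior_subset _ _)) clWB.
have [A0|[e Ae AWe]] := lindelof_seq_subcover (f := W) lA
    (fun a Aa => (WP a Aa).1.1) (fun a Aa => ex_intro2 _ _ a Aa (WP a Aa).1.2).
  exists (fun=> set0); split=> [n|x|n]; [exact: open0 | by rewrite A0 |].
  by rewrite closure0 set0I.
exists (W \o e); split=> [n|//|n]; first exact: (WP _ (Ae n)).1.1.
by apply/disjoints_subset; exact: (WP _ (Ae n)).2.
Qed.

Lemma regular_lindelof_separation (A B : set T) :
  lindelof A -> lindelof B -> closed A -> closed B -> A `&` B = set0 ->
  exists U V : set T, [/\ open U, open V, A `<=` U, B `<=` V & U `&` V = set0].
Proof.
move=> lA lB cA cB AB.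
have [u [uo Au uB]] := regular_lindelof_closure_cover lA cB AB.
have [w [wo Bw wA]] := regular_lindelof_closure_cover lB cA (etrans (setIC B A) AB).
pose cl_upto (v : nat -> set T) n := \bigcup_(k in `I_n.+1) closure (v k).
have cl_upto_closed v n : closed (cl_upto v n).
  by apply: closed_bigcup => [|k _]; [exact: finite_II | exact: closed_closure].
have cl_upto_disj v C n :
    (forall k, closure (v k) `&` C = set0) -> cl_upto v n `&` C = set0.
  move=> vC; apply/disjoints_subset => x [k _ vkx] Cx.
  by rewrite -[False]/(set0 x) -(vC k).
exists (\bigcup_n (u n `\` cl_upto w n)), (\bigcup_n (w n `\` cl_upto u n)); split.
- by apply: bigcup_open => n _; apply: openI => //; exact: closed_openC.
- by apply: bigcup_open => n _; apply: openI => //; exact: closed_openC.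
- move=> a Aa; have [n _ una] := Au a Aa; exists n => //; split => // wna.
  by rewrite -[False]/(set0 a) -(cl_upto_disj w A n wA).
- move=> b Bb; have [n _ wnb] := Bw b Bb; exists n => //; split => // unb.
  by rewrite -[False]/(set0 b) -(cl_upto_disj u B n uB).
- apply/disjoints_subset => y [n _ [uny nwy]] [m _ [wmy nuy]].
  have [mn|nm] := leqP m n.
    by apply: nwy; exists m => //; exact: subset_closure.
  by apply: nuy; exists n => //=; [exact: ltnW | exact: subset_closure].
Qed.

Lemma closed_lindelof_subspace_normal (K : set T) :
  closed K -> lindelof K -> normal_space (subspace K).
Proof.
move=> cK lK; apply/(@normal_openP Rdefinitions.R) => A B cA cB AB.
have closedIK (C : set (subspace K)) : closed C -> closed (C `&` K : set T).
  by move=> /closed_subspaceP [C0 cC0 <-]; exact: closedI.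
have lindelofIK (C : set (subspace K)) : closed C -> lindelof (C `&` K : set T).
  by move=> cC; exact: (lindelof_closed_subset lK (closedIK C cC) (@subIsetr _ _ _)).
have ABK : (A `&` K) `&` (B `&` K) = set0.
  by rewrite setIACA AB set0I.
have [U [V [oU oV AU BV UV]]] := regular_lindelof_separation (lindelofIK A cA)
  (lindelofIK B cB) (closedIK A cA) (closedIK B cB) ABK.
have open_patch (W C : set T) :
    open W -> open ((W `&` K) `|` (C `\` K) : set (subspace K)).
  move=> oW; rewrite -open_subspaceIT (_ : _ `&` K = W `&` K).
    by rewrite open_subspaceIT; exact: open_subspaceW.
  by apply/seteqP; split=> x; [case=> -[[]|[]] | case=> Wx Kx; split; [left|]].
exists ((U `&` K) `|` (A `\` K)), ((V `&` K) `|` (B `\` K)); split; try exact: open_patch.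
- by move=> x Ax; have [Kx|nKx] := pselect (K x); [left; split; first exact: AU | right].
- by move=> x Bx; have [Kx|nKx] := pselect (K x); [left; split; first exact: BV | right].
- apply/disjoints_subset => x [[Ux Kx]|[Ax nKx]] [[Vx _]|[Bx nKx']] //.
    by rewrite -[False]/(set0 x) -UV.
  by rewrite -[False]/(set0 x) -AB.
Qed.

End regular_lindelof.

Definition closed_discrete {T : topologicalType} (D : set T) :=
  forall y, exists2 V, open_nbhs y V & V `&` D `<=` [set y].

Definition locally_finite_seq {T : topologicalType} (x : nat -> T) :=
  forall y, exists2 V, open_nbhs y V & exists m, forall n, (m <= n)%N -> ~ V (x n).

Section closed_discrete.
Context {T : topologicalType}.
Implicit Types (D : set T) (x : nat -> T).

Lemma closed_discrete_closed D : closed_discrete D -> closed D.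
Proof.
move=> dD y Dy; have [V Vy VD] := dD y.
by have [z [Dz Vz]] := Dy V (open_nbhs_nbhs Vy); rewrite -(VD z).
Qed.

Lemma closed_discrete_continuous_within (U : topologicalType) D (f : T -> U) :
  closed_discrete D -> {within D, continuous f}.
Proof.
move=> dD; rewrite continuous_subspace_in => y /set_mem Dy W Wfy.
have [V [oV Vy] VD] := dD y.
apply/(@nbhs_subspace_ex _ D (f @^-1` W) y Dy).
exists (V `|` (f @^-1` W `&` D)).
  by apply: filterS (open_nbhs_nbhs (conj oV Vy)) => z Vz; left.
apply/seteqP; split=> z; first by move=> [fz Dz]; split => //; right.
case=> -[Vz|[fz _]] Dz; split => //.
by rewrite (VD z (conj Vz Dz)); exact: nbhs_singleton Wfy.
Qed.

Lemma closed_discrete_subspace (K D : set T) :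
  closed_discrete D -> closed_discrete (D : set (subspace K)).
Proof.
move=> dD y; have [V [oV Vy] VD] := dD y.
by exists V => //; split => //; exact: open_subspaceW.
Qed.

Lemma not_countably_compact_locally_finite_seq :
  ~ countably_compact T -> exists x : nat -> T, locally_finite_seq x.
Proof.
move=> nccT; apply: contrapT => nx; apply: nccT => U oU covU; apply: contrapT => nfin.
have /choice [x xU] n : exists y, forall k, (k <= n)%N -> ~ U k y.
  apply: contrapT => allU; apply: nfin; exists n.+1 => y _.
  apply: contrapT => nUy; apply: allU; exists y => k kn Uky; apply: nUy; by exists k.
have /choice [N UN] y : exists k, U k y by have [k _ Uky] := covU y Logic.I; exists k.
apply: nx; exists x => y; exists (U (N y)); first by split.
by exists (N y) => n Nn; exact: xU.
Qed.

Lemma locally_finite_seq_bound x :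
  locally_finite_seq x -> exists N : T -> nat, forall n, (n < N (x n))%N.
Proof.
move=> lfx; have /choice [N NP] y : exists m, exists2 V, open_nbhs y V &
    forall n, (m <= n)%N -> ~ V (x n).
  by have [V Vy [m Vm]] := lfx y; exists m, V.
exists N => n; rewrite ltnNge; apply/negP => Nn.
by have [V [_ Vxn] nV] := NP (x n); exact: nV _ Nn Vxn.
Qed.

Lemma locally_finite_seq_closed_discrete x :
  accessible_space T -> locally_finite_seq x -> closed_discrete (range x).
Proof.
move=> aT lfx y; have [V [oV Vy] [m Vm]] := lfx y.
pose F := x @` [set k | (k < m)%N /\ x k <> y].
have cF : closed F.
  apply: (accessible_finite_set_closed.1 aT); apply: finite_image.
  by apply: sub_finite_set (finite_II m) => k [].
exists (V `\` F).
  by split; [exact: (openI oV (closed_openC cF)) | split=> // -[k [_ xky] /xky]].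
move=> z [[Vz nFz] [k _ xkz]]; apply: contrapT => zy; apply: nFz.
exists k => //; split; last by rewrite xkz.
by rewrite ltnNge; apply/negP => /Vm; rewrite xkz; apply.
Qed.

End closed_discrete.

Lemma closed_discrete_extension (R : realType) (T : topologicalType)
    (D C : set T) (h : T -> R) :
  normal_space T -> closed_discrete D -> closed C -> D `&` C = set0 ->
  (forall y, D y -> 1 <= h y) ->
  exists F : T -> R, [/\ continuous F, forall y, D y -> F y = h y
                                     & forall y, C y -> F y = 1].
Proof.
move=> nT dD cC DC h1.
(* Tietze extends [t] to [g] with [|g| <= 1]; the Urysohn factor [v] vanishes
   where [g >= 1] and on [C], so [1 - g v > 0], and [(1 - g v)^-1] is [h] on [D]
   and [1] on [C]. *)
pose t y := 1 - (h y)^-1.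
have t01 y : D y -> 0 <= t y < 1.
  move=> Dy; have h0 : 0 < h y by exact: lt_le_trans ltr01 (h1 y Dy).
  rewrite /t subr_ge0 invf_le1 // h1 //= ltrBlDr ltrDl invr_gt0 //.
have t_norm y : D y -> `|t y| <= 1.
  by move=> /t01 /andP [t0 t1]; rewrite ger0_norm // ltW.
have [g [tg gc _]] := continuous_bounded_extension nT (closed_discrete_closed dD)
  ltr01 (closed_discrete_continuous_within (f := t) dD) t_norm.
pose Z := [set y | 1 <= g y].
have cZ : closed Z by move: gc => /continuous_closedP /(_ _ (@closed_ge _ 1)).
have ZCD : (Z `|` C) `&` D = set0.
  apply/disjoints_subset => y [Zy|Cy] Dy.
    have /andP [_] := t01 y Dy; rewrite tg; last exact: mem_set.
    by move=> /lt_le_trans /(_ Zy); rewrite ltxx.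
  by rewrite -[False]/(set0 y) -DC.
have [v [vc v0 v1 v01]] := @urysohn_ext_itv T R nT _ _ 0 1 (closedU cZ cC)
  (closed_discrete_closed dD) ZCD ltr01.
have v_bounds y : 0 <= v y <= 1 by have := v01 _ (imageT v y); rewrite /= in_itv.
have gv_lt1 y : g y * v y < 1.
  have [Zy|nZy] := pselect (Z y).
    by rewrite (v0 (v y)) ?mulr0 //; exists y => //; left.
  have /andP [? ?] := v_bounds y; move/negP: nZy; rewrite -ltNge => ?.
  by have [?|?] := leP 0 (g y); nra.
exists (fun y => (1 - g y * v y)^-1); split.
- move=> y; apply: (@continuousV _ T (fun y => 1 - g y * v y)).
    by rewrite subr_eq0 gt_eqF.
  by apply: continuousB; [exact: cvg_cst | exact: (continuousM (gc y) (vc y))].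
- move=> y Dy; have -> : v y = 1 by apply: v1; exists y.
  rewrite mulr1 -tg; last exact: mem_set.
  by rewrite /t opprB addrC subrK invrK.
- move=> y Cy; have -> : v y = 0 by apply: v0; exists y => //; right.
  by rewrite mulr0 subr0 invr1.
Qed.

Lemma continuous_glue_cst (T U : topologicalType) (K V : set T) (F : T -> U) (c : U) :
  closed K -> open V -> V `<=` K -> {within K, continuous F} ->
  (forall x, K x -> ~ V x -> F x = c) ->
  continuous (fun x => if pselect (V x) then F x else c).
Proof.
move=> cK oV VK Fc Fc_out; apply/continuous_subspace_setT.
have -> : [set: T] = K `|` ~` V.
  by apply/seteqP; split=> x // _; have [/VK|] := pselect (V x); [left | right].
apply: withinU_continuous => //; first exact: open_closedC.
  apply: subspace_eq_continuous Fc => x /set_mem Kx /=.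
  by rewrite /from_subspace; case: pselect => // nVx; rewrite Fc_out.
apply: (@subspace_eq_continuous _ _ _ (cst c)); last by move=> x; exact: cvg_cst.
by move=> x /set_mem nVx; rewrite /from_subspace; case: pselect.
Qed.

Section typeI_space.
Context (X : topologicalType) (I : Type) (lt : I -> I -> Prop) (Xs : I -> set X).
Hypotheses (lt_omega1 : omega1_order lt) (Xs_open : forall a, open (Xs a))
  (Xs_closure : forall a b, lt a b -> closure (Xs a) `<=` Xs b)
  (Xs_lindelof : forall a, lindelof (closure (Xs a)))
  (Xs_cover : [set: X] = \bigcup_(a in [set: I]) Xs a)
  (Xs_proper : forall a, Xs a <> [set: X]).

Lemma typeI_index (x : X) : exists a, Xs a x.
Proof. by have : [set: X] x by []; rewrite Xs_cover => -[a _ Xax]; exists a. Qed.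

Lemma typeI_countable_bounded (J : set I) :
  countable J -> exists b, \bigcup_(a in J) Xs a `<=` Xs b.
Proof.
move=> /(omega1_countable_bounded lt_omega1) [b Jb].
by exists b => x [a Ja Xax]; exact/(Xs_closure (Jb a Ja))/subset_closure.
Qed.

Lemma typeI_lindelof_bounded (Z : set X) : lindelof Z -> exists b, Z `<=` Xs b.
Proof.
move=> lZ; have /choice [a Xa] := typeI_index.
have [D' [_ cD'] ZD'] := lZ X Z (Xs \o a) (fun x _ => Xs_open _)
  (fun x Zx => ex_intro2 _ _ x Zx (Xa x)).
have [b Jb] := typeI_countable_bounded (sub_countable (card_image_le a D') cD').
by exists b => z /ZD' [x D'x Xz]; apply: Jb; exists (a x) => //; exists x.
Qed.

Lemma typeI_countably_compact :
  accessible_space X -> regular_space X -> pseudocompact X -> countably_compact X.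
Proof.
move=> aX rX pcX; apply: contrapT => /not_countably_compact_locally_finite_seq [x lfx].
have [N xN] := locally_finite_seq_bound lfx.
have [b xb] : exists b, range x `<=` Xs b.
  have /choice [a Xa] := typeI_index.
  have [b Jb] := typeI_countable_bounded
    (sub_countable (card_image_le (a \o x) setT) (countableP _)).
  by exists b => _ [n _ <-]; apply: Jb; exists (a (x n)); [exists n | exact: Xa].
pose K := closure (Xs b).
have xK : range x `&` (K `\` Xs b) = set0.
  by apply/disjoints_subset => y /xb Xby [].
have [F [Fc FD FC]] := @closed_discrete_extension Rdefinitions.R (subspace K) (range x)
  (K `\` Xs b) (fun y => (N y).+1%:R)
  (closed_lindelof_subspace_normal rX (@closed_closure _ _) (@Xs_lindelof b))
  (closed_discrete_subspace (K := K) (locally_finite_seq_closed_discrete aX lfx))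
  (closed_subspaceW (closedI (@closed_closure _ _) (open_closedC (Xs_open b))))
  xK (fun y _ => ler1n _ _).
pose G y := if pselect (Xs b y) then F y else 1.
have Gc : continuous G := continuous_glue_cst (@closed_closure _ _) (Xs_open b)
  (@subset_closure _ _) Fc (fun y Ky nXy => FC y (conj Ky nXy)).
have [M GM] := pcX G Gc.
have [n Mn] : exists n : nat, M < n%:R.
  exists (Num.Def.archi_bound `|M|).
  exact: le_lt_trans (ler_norm M) (archi_boundP (normr_ge0 M)).
have Gxn : G (x n) = (N (x n)).+1%:R.
  by rewrite /G; case: pselect => [?|/(_ (xb _ (imageT x n)))//]; exact/FD/imageT.
have := GM (x n); rewrite Gxn ger0_norm // leNgt.
by rewrite (lt_trans Mn) // ltr_nat ltnS ltnW.
Qed.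

Lemma typeI_lindelof_in_compact : countably_compact X ->
  forall Z : set X, lindelof Z -> exists K, [/\ compact K, Z `<=` K & ~` K !=set0].
Proof.
move=> ccX Z /typeI_lindelof_bounded [a Za].
have [c ac] := omega1_countable_bounded lt_omega1 (countable1 a).
exists (closure (Xs a)); split.
- exact: countably_compact_lindelof_compact ccX (@closed_closure _ _) (@Xs_lindelof a).
- by move=> z /Za; exact: subset_closure.
- have [p nXp] : exists p, ~ Xs c p.
    by apply/existsNP => Xc; apply: (@Xs_proper c); apply/seteqP; split=> p.
  by exists p => /(Xs_closure (ac a erefl)).
Qed.

End typeI_space.

Lemma closed_fixpoints (T : topologicalType) (r : T -> T) :
  hausdorff_space T -> continuous r -> closed [set z | r z = z].
Proof.
move=> hT rc y cly; apply: hT => A B /= Ary By.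
have [z [rzz [Bz Arz]]] := cly (B `&` r @^-1` A) (filterI By (rc y A Ary)).
by exists z; split => //; rewrite -rzz.
Qed.

Section compact_hulls.
Context (X Y : topologicalType).
Hypothesis lindelof_in_compact :
  forall Z : set X, lindelof Z -> exists K, [/\ compact K, Z `<=` K & ~` K !=set0].

Lemma EC_iff_cpt : EC X Y <-> EC_cpt X Y.
Proof.
split=> EC_XY f fc; have [Z [sZ [y fZ]]] := EC_XY f fc; last first.
  by exists Z; split; [exact: compact_lindelof | exists y].
have [K [cK ZK [p nKp]]] := lindelof_in_compact sZ.
have fnK : f @` (~` K) `<=` [set y] by rewrite -fZ => _ [z nKz <-]; exists z => // /ZK.
exists K; split=> //; exists y; apply/seteqP; split=> // _ ->.
by exists p => //; exact: fnK.
Qed.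

Lemma S_iff_cpt : hausdorff_space X -> S X Y <-> S_cpt X Y.
Proof.
move=> hX; split=> S_XY f fc; have [Z [sZ [r [rc rZ rid rf]]]] := S_XY f fc; last first.
  by exists Z; split; [exact: compact_lindelof | exists r].
exists Z; split; last by exists r.
have [K [cK ZK _]] := lindelof_in_compact sZ.
apply: subclosed_compact cK ZK.
have -> : Z = [set z | r z = z] by apply/seteqP; split=> [z /rid|z <-].
exact: closed_fixpoints.
Qed.

Lemma L_iff_cpt : L X Y <-> L_cpt X Y.
Proof.
split=> L_XY f fc; have [Z [sZ fZ]] := L_XY f fc; last first.
  by exists Z; split => //; exact: compact_lindelof.
have [K [cK ZK _]] := lindelof_in_compact sZ.
exists K; split=> //; apply/seteqP; split; first exact: image_subset.
by rewrite -fZ; exact: image_subset.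
Qed.

Lemma BR_iff_cpt : BR X Y <-> BR_cpt X Y.
Proof.
split=> BR_XY f fc; have [Z [sZ fZ]] := BR_XY f fc.
  have [K [cK ZK _]] := lindelof_in_compact sZ.
  exists K; split=> // W cW KW.
  rewrite (fZ W (compact_lindelof cW) (subset_trans ZK KW)).
  by rewrite (fZ K (compact_lindelof cK) ZK).
exists Z; split=> [|W lW ZW]; first exact: compact_lindelof.
have [K [cK WK _]] := lindelof_in_compact lW.
apply/seteqP; split; first by apply: image_subset; exact: subsetC.
rewrite -(fZ K cK (subset_trans ZW WK)); apply: image_subset; exact: subsetC.
Qed.

End compact_hulls.

Theorem theorem9p4 (X Y : topologicalType) :
  hausdorff_space X -> regular_space X -> typeI X -> pseudocompact X ->
  hausdorff_space Y ->
  [/\ countably_compact X,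
      (EC X Y <-> EC_cpt X Y),
      (S X Y <-> S_cpt X Y),
      (L X Y <-> L_cpt X Y) &
      (BR X Y <-> BR_cpt X Y)].
Proof.
move=> hX rX [I [lt [Xs [lt_omega1 [Xs_open Xs_closure Xs_lindelof Xs_cover
  Xs_proper]]]]] pcX _.
have ccX : countably_compact X :=
  typeI_countably_compact lt_omega1 Xs_open Xs_closure Xs_lindelof Xs_cover
    (hausdorff_accessible hX) rX pcX.
have hulls := typeI_lindelof_in_compact lt_omega1 Xs_open Xs_closure Xs_lindelof
  Xs_cover Xs_proper ccX.
by split=> //;
  [exact: EC_iff_cpt | exact: S_iff_cpt | exact: L_iff_cpt | exact: BR_iff_cpt].
Qed.
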